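(* For every positive integer $s$, the maximum size $l(s)$ of an $(s,s+1,s+2)$-core partition is $$l(s)=\begin{cases} m\binom{m+1}{3}, & s=2m-1,\\[4pt] (m+1)\binom{m+1}{3}+\binom{m+2}{3}, & s=2m.\end{cases}$$
   Context: A partition is an $(s,s+1,s+2)$-core if none of the hook lengths of the boxes of its Young diagram is divisible by $s$, by $s+1$, or by $s+2$. The size of a partition is the sum of its parts. *)

From mathcomp Require Import all_boot.
Set Implicit Arguments. Unset Strict Implicit. Unset Printing Implicit Defensive.

Definition is_partition (p : seq nat) : Prop :=
  sorted geq p /\ all (fun x => 0 < x) p.

Definition conj_part (p : seq nat) (j : nat) : nat := count (fun x => j < x) p.

(* hook length of box (i, j): arm + leg + 1
   = (p_i - j - 1) + (p'_j - i - 1) + 1 *)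
Definition hook (p : seq nat) (i j : nat) : nat :=
  (nth 0 p i - j) + (conj_part p j - i) - 1.

Definition in_diagram (p : seq nat) (i j : nat) : Prop :=
  i < size p /\ j < nth 0 p i.

Definition is_sss_core (s : nat) (p : seq nat) : Prop :=
  is_partition p /\
  forall i j, in_diagram p i j ->
    ~~ (s %| hook p i j) /\ ~~ (s.+1 %| hook p i j) /\ ~~ (s.+2 %| hook p i j).

Definition psize (p : seq nat) : nat := sumn p.

Definition is_max_core_size (s n : nat) : Prop :=
  (exists p, is_sss_core s p /\ psize p = n) /\
  (forall p, is_sss_core s p -> psize p <= n).

From mathcomp Require Import all_boot zify.
Set Implicit Arguments. Unset Strict Implicit. Unset Printing Implicit Defensive.

(* A partition p is encoded by its first-column hook lengths, its beta-set B:
   |p| = sum B - C(#B, 2), and p is an (s, s+1, s+2)-core iff B is closed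
   under subtracting s, s+1 and s+2 within the positive integers.  Such a B
   consists of gaps of the numerical semigroup <s, s+1, s+2>, the numbers
   q(s+2) + r with 0 < r < s - 2q.  Sorting B into layers by q, layer q has
   k_q <= s - 1 - 2q elements, all at most (q+1)s - 1, and closedness forces
   k_(q+1) + 2 <= k_q whenever layer q+1 is nonempty.  Bounding each layer by
   its top elements reduces the claim to an inequality on such profiles k,
   proved by induction on s by peeling off layer 0; the maximal profile is
   attained by the set of all gaps, and summing it gives the closed forms. *)

Definition beta_num (p : seq nat) (i : nat) : nat := nth 0 p i + (size p - 1 - i).
Definition beta_set (p : seq nat) : seq nat := map (beta_num p) (iota 0 (size p)).

(* For j < p_0 these enumerate the non-members of [beta_set p] below its
   maximum; the box (i, j) has hook length [beta_num p i - col_gap p j]. *)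
Definition col_gap (p : seq nat) (j : nat) : nat := size p + j - conj_part p j.

Lemma conj_part_le_size p j : conj_part p j <= size p.
Proof. exact: count_size. Qed.

Lemma conj_part_antitone p : {homo conj_part p : j1 j2 / j1 <= j2 >-> j2 <= j1}.
Proof. by move=> j1 j2 le_j; apply: sub_count => x /=; apply: leq_ltn_trans. Qed.

Lemma col_gap_increasing p : {homo col_gap p : j1 j2 / j1 < j2}.
Proof.
move=> j1 j2 lt_j; have := conj_part_antitone p (ltnW lt_j).
have := conj_part_le_size p j1; rewrite /col_gap; lia.
Qed.

Lemma ltn_conj_part p j l : sorted geq p -> (l < conj_part p j) = (j < nth 0 p l).
Proof.
elim: p l => [|a p IH] l p_sorted; first by rewrite nth_nil.
have le_a := order_path_min (rev_trans leq_trans) p_sorted.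
rewrite /conj_part /=; case: (ltnP j a) => [lt_ja | le_aj] /=.
  by case: l => [|l] //=; rewrite add1n ltnS IH // (path_sorted p_sorted).
have le_nth_a l' : nth 0 p l' <= a.
  case: (ltnP l' (size p)) => [lt_l'|le_l']; last by rewrite nth_default.
  exact: (allP le_a _ (mem_nth 0 lt_l')).
have -> : count (fun x => j < x) p = 0.
  apply/eqP; rewrite -leqn0 leqNgt -has_count; apply/hasPn => x /(allP le_a) /=.
  by rewrite -leqNgt => /leq_trans; apply.
by case: l => [|l] /=; apply/esym/negbTE; rewrite -leqNgt // (leq_trans (le_nth_a l)).
Qed.

Section BetaSet.

Variable p : seq nat.
Hypothesis p_part : is_partition p.
Let k := size p.

Lemma part_sorted : sorted geq p. Proof. by case: p_part. Qed.

Lemma nth_part_gt0 i : i < k -> 0 < nth 0 p i.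
Proof. by move=> lt_ik; case: p_part => _ /allP; apply; apply: mem_nth. Qed.

Lemma nth_part_antitone i l : i <= l -> l < k -> nth 0 p l <= nth 0 p i.
Proof.
move=> le_il lt_lk.
apply: (sorted_leq_nth (rev_trans leq_trans) leqnn 0 part_sorted) => //.
by rewrite inE (leq_ltn_trans le_il).
Qed.

Lemma hook_add_col_gap i j : i < k -> j < nth 0 p i ->
  hook p i j + col_gap p j = beta_num p i.
Proof.
move=> lt_ik lt_j; have := conj_part_le_size p j.
have : i < conj_part p j by rewrite ltn_conj_part // part_sorted.
rewrite /hook /col_gap /beta_num -/k; lia.
Qed.

Lemma hook_gt0 i j : i < k -> j < nth 0 p i -> 0 < hook p i j.
Proof.
move=> lt_ik lt_j; have : i < conj_part p j by rewrite ltn_conj_part // part_sorted.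
by rewrite /hook; lia.
Qed.

Lemma col_gap_notin_beta j : col_gap p j \notin beta_set p.
Proof.
apply/mapP => -[l]; rewrite mem_iota add0n => /andP [_ lt_lk].
have := conj_part_le_size p j; have := ltn_conj_part j l part_sorted.
rewrite /col_gap /beta_num -/k; case: (ltnP j (nth 0 p l)); lia.
Qed.

Lemma beta_num_decr i l : i < l -> l < k -> beta_num p l < beta_num p i.
Proof.
by move=> lt_il lt_lk; have := nth_part_antitone (ltnW lt_il) lt_lk; rewrite /beta_num -/k; lia.
Qed.

Lemma beta_num_gt0 i : i < k -> 0 < beta_num p i.
Proof. by move=> lt_ik; have := nth_part_gt0 lt_ik; rewrite /beta_num; lia. Qed.

Lemma beta_set_uniq : uniq (beta_set p).
Proof.
rewrite map_inj_in_uniq ?iota_uniq //; apply/decn_inj_in/leq_nmono_in => i l.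
by rewrite !mem_iota add0n => /andP [_ lt_ik] _ lt_li; apply: beta_num_decr lt_li lt_ik.
Qed.

Lemma beta_set_gt0 x : x \in beta_set p -> 0 < x.
Proof. by case/mapP => i; rewrite mem_iota add0n => /andP [_ /beta_num_gt0] + ->. Qed.

Lemma psize_beta_set : psize p + 'C(k, 2) = sumn (beta_set p).
Proof.
have -> : sumn (beta_set p) = \sum_(0 <= i < k) beta_num p i.
  by rewrite sumnE big_map /index_iota subn0.
rewrite big_split /= -bin2_sum; congr (_ + _).
  by rewrite /psize -{1}(mkseq_nth 0 p) /mkseq sumnE big_map /index_iota subn0.
by rewrite big_nat_rev /=; apply: eq_big_nat => i /andP [_ lt_ik]; rewrite add0n; lia.
Qed.

Lemma count_beta_set_below i : i < k ->
  k - 1 - i <= count (fun z => z \in beta_set p) (iota 0 (beta_num p i)).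
Proof.
move=> lt_ik; rewrite -size_filter.
have -> : k - 1 - i = size (map (beta_num p) (iota i.+1 (k - 1 - i))).
  by rewrite size_map size_iota.
apply: uniq_leq_size.
  rewrite map_inj_in_uniq ?iota_uniq //; apply/decn_inj_in/leq_nmono_in.
  by move=> a b; rewrite !mem_iota => /andP [_ ?] /andP [_ ?] lt_ab; apply: beta_num_decr; lia.
move=> z /mapP [l]; rewrite mem_iota => lt_l ->.
rewrite mem_filter mem_iota add0n /= map_f ?mem_iota ?add0n ?beta_num_decr //; lia.
Qed.

Lemma col_gap_onto i y : i < k -> y < beta_num p i -> y \notin beta_set p ->
  exists2 j, j < nth 0 p i & col_gap p j = y.
Proof.
move=> lt_ik lt_y y_notin.
set gaps := [seq z <- iota 0 (beta_num p i) | z \notin beta_set p].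
set cols := map (col_gap p) (iota 0 (nth 0 p i)).
have cols_uniq : uniq cols.
  by rewrite map_inj_uniq ?iota_uniq //; apply/incn_inj/leq_mono/col_gap_increasing.
have cols_sub : {subset cols <= gaps}.
  move=> z /mapP [j]; rewrite mem_iota add0n => /andP [_ lt_j] ->.
  rewrite mem_filter col_gap_notin_beta mem_iota add0n /= -(hook_add_col_gap lt_ik lt_j).
  by have := hook_gt0 lt_ik lt_j; lia.
have size_gaps : size gaps <= size cols.
  rewrite size_map size_iota size_filter.
  have : count (fun z => z \in beta_set p) (iota 0 (beta_num p i))
       + count (fun z => z \notin beta_set p) (iota 0 (beta_num p i)) = beta_num p i.
    by rewrite count_predC size_iota.
  have := count_beta_set_below lt_ik; rewrite /beta_num -/k; lia.
have [_ eq_cols] := uniq_min_size cols_uniq cols_sub size_gaps.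
have : y \in gaps by rewrite mem_filter y_notin mem_iota add0n.
by rewrite -eq_cols => /mapP [j]; rewrite mem_iota add0n => /andP [_ lt_j] ->; exists j.
Qed.

End BetaSet.

Definition sss_closed (s : nat) (b : seq nat) : Prop :=
  forall x e, x \in b -> e < 3 -> s + e <= x -> x != s + e /\ x - (s + e) \in b.

Lemma closed_subn_mul s b e c x : sss_closed s b -> e < 3 ->
  x \in b -> c * (s + e) <= x -> x - c * (s + e) \in b.
Proof.
move=> b_closed lt_e3; elim: c x => [|c IH] x x_in; first by rewrite mul0n subn0.
rewrite mulSn => le_x.
have [_ y_in] := b_closed _ e (IH x x_in ltac:(lia)) lt_e3 ltac:(lia).
by rewrite addnC subnDA.
Qed.

Lemma sss_coreP s p : is_partition p ->
  is_sss_core s p <-> sss_closed s (beta_set p).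
Proof.
move=> p_part; split=> [[_ p_core] | b_closed].
  move=> x e /mapP [i]; rewrite mem_iota add0n => /andP [_ lt_ik] -> lt_e3 le_x.
  case: (boolP (beta_num p i - (s + e) \in beta_set p)) => [y_in | y_notin].
    by split=> //; apply: contraTneq (beta_set_gt0 p_part y_in) => ->; rewrite subnn.
  have [|j lt_j eq_y] := col_gap_onto p_part lt_ik _ y_notin.
    case: (posnP (s + e)) y_notin => [-> | ]; last by lia.
    by rewrite subn0 map_f // mem_iota.
  have eq_hook : hook p i j = s + e.
    by have := hook_add_col_gap p_part lt_ik lt_j; rewrite eq_y; lia.
  have [+ [+ +]] := p_core i j (conj lt_ik lt_j); rewrite eq_hook.
  by case: e lt_e3 {le_x eq_y y_notin eq_hook} => [|[|[|]]] //= _;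
    rewrite ?addn0 ?addn1 ?addn2 dvdnn.
split=> // i j [lt_ik lt_j].
have hook_not_dvd e : e < 3 -> ~~ (s + e %| hook p i j).
  move=> lt_e3; apply/negP => /dvdnP [c eq_hook].
  have eq_gap := hook_add_col_gap p_part lt_ik lt_j.
  have := col_gap_notin_beta p_part j; rewrite -(addKn (hook p i j) (col_gap p j)).
  rewrite eq_gap eq_hook closed_subn_mul ?map_f ?mem_iota //.
  by rewrite -eq_hook -eq_gap leq_addr.
have := hook_not_dvd 0; have := hook_not_dvd 1; have := hook_not_dvd 2.
by rewrite addn0 addn1 addn2 => -> // -> // ->.
Qed.

Definition part_of_beta (b : seq nat) : seq nat :=
  [seq nth 0 b i - (size b - 1 - i) | i <- iota 0 (size b)].

Section PartOfBeta.

Variable b : seq nat.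
Hypothesis b_decr : sorted (fun x y => y < x) b.
Hypothesis b_gt0 : all (fun x => 0 < x) b.

Lemma nth_decr_gap i l : i <= l -> l < size b -> nth 0 b l + (l - i) <= nth 0 b i.
Proof.
elim: l => [|l IH]; first by rewrite leqn0 => /eqP -> _; rewrite subnn addn0.
rewrite leq_eqVlt ltnS => /orP [/eqP <- | le_il] lt_l; first by rewrite subnn addn0.
have := IH le_il (ltnW lt_l); have := (sortedP 0 b_decr) l lt_l => /=; lia.
Qed.

Lemma size_sub_le_nth i : i < size b -> size b - i <= nth 0 b i.
Proof.
move=> lt_i; have lt_last : (size b).-1 < size b by case: (size b) lt_i.
have le_i_last : i <= (size b).-1 by rewrite -ltnS (ltn_predK lt_i).
have := nth_decr_gap le_i_last lt_last.
have /= := allP b_gt0 _ (mem_nth 0 lt_last); lia.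
Qed.

Lemma size_part_of_beta : size (part_of_beta b) = size b.
Proof. by rewrite size_map size_iota. Qed.

Lemma nth_part_of_beta i : i < size b ->
  nth 0 (part_of_beta b) i = nth 0 b i - (size b - 1 - i).
Proof. by move=> lt_i; rewrite (nth_map 0) ?size_iota // nth_iota. Qed.

Lemma part_of_beta_partition : is_partition (part_of_beta b).
Proof.
split.
  apply/(sortedP 0) => i; rewrite size_part_of_beta => lt_i.
  rewrite !nth_part_of_beta ?(ltnW lt_i) //=.
  by have := (sortedP 0 b_decr) i lt_i; have := size_sub_le_nth lt_i; rewrite /=; lia.
apply/allP => x /mapP [i]; rewrite mem_iota add0n => /andP [_ lt_i] ->.
by have := size_sub_le_nth lt_i; lia.
Qed.

Lemma beta_set_part_of_beta : beta_set (part_of_beta b) = b.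
Proof.
rewrite /beta_set size_part_of_beta -[RHS](mkseq_nth 0 b) /mkseq.
apply/eq_in_map => i; rewrite mem_iota add0n => /andP [_ lt_i].
by rewrite /beta_num size_part_of_beta nth_part_of_beta //; have := size_sub_le_nth lt_i; lia.
Qed.

End PartOfBeta.

Definition sss_gap (s x : nat) : bool :=
  (0 < x %% s.+2) && (x %% s.+2 + 2 * (x %/ s.+2) < s).

Definition nlayers (s : nat) : nat := s./2.

Lemma divmodnMDl d q r : r < d -> (q * d + r) %/ d = q /\ (q * d + r) %% d = r.
Proof.
by move=> lt_rd; rewrite divnMDl ?divn_small ?addn0 ?modnMDl ?modn_small //; lia.
Qed.

Lemma sss_gapP s q r : 0 < r -> r + 2 * q < s -> sss_gap s (q * s.+2 + r).
Proof.
move=> r_gt0 lt_r; rewrite /sss_gap; have [-> ->] := @divmodnMDl s.+2 q r ltac:(lia).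
by rewrite r_gt0 lt_r.
Qed.

Lemma sss_gap_layer s x : sss_gap s x -> x %/ s.+2 < nlayers s.
Proof. by case/andP; rewrite /nlayers; lia. Qed.

Section ClosedSet.

Variables (s : nat) (b : seq nat).
Hypothesis b_closed : sss_closed s b.

Lemma closed_not_sum t x : x \in b -> t * s <= x -> x <= t * s.+2 -> t = 0.
Proof.
elim: t x => [|t IH] x // x_in le_x ge_x; exfalso.
(* Subtract s + e with e chosen so that the rest stays in [t s, t (s+2)]. *)
set e := minn 2 (x - t.+1 * s).
have lt_e3 : e < 3 by rewrite /e; lia.
have le_x' : s + e <= x by rewrite /e; nia.
have [neq_x y_in] := b_closed x_in lt_e3 le_x'.
have t0 : t = 0 by apply: (IH _ y_in); rewrite /e; nia.
by move: neq_x le_x ge_x; rewrite /e t0; lia.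
Qed.

Hypothesis b_gt0 : all (fun x => 0 < x) b.

Lemma closed_sss_gap x : x \in b -> sss_gap s x.
Proof.
move=> x_in; have /= x_gt0 := allP b_gt0 x x_in.
have eq_x := divn_eq x s.+2; have lt_r := ltn_pmod x (ltn0Sn s.+1).
rewrite /sss_gap; move: (x %/ s.+2) (x %% s.+2) eq_x lt_r => q r eq_x lt_r.
apply/andP; split.
  by rewrite lt0n; apply/eqP => r0; have := @closed_not_sum q x x_in; lia.
by rewrite ltnNge; apply/negP => le_s; have := @closed_not_sum q.+1 x x_in; nia.
Qed.

End ClosedSet.

Definition layer (s j : nat) (b : seq nat) : seq nat := [seq x <- b | x %/ s.+2 == j].
Definition layer_size (s : nat) (b : seq nat) (j : nat) : nat := size (layer s j b).

Lemma sum_layers s b (f : nat -> nat) : all (sss_gap s) b ->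
  \sum_(x <- b) f x = \sum_(j < nlayers s) \sum_(x <- layer s j b) f x.
Proof.
move=> b_gaps.
rewrite (eq_big_seq (fun x => \sum_(j < nlayers s) (if j == x %/ s.+2 :> nat then f x else 0))).
  rewrite exchange_big /=; apply: eq_bigr => j _.
  by rewrite /layer big_filter [RHS]big_mkcond; apply: eq_bigr => x _; rewrite eq_sym.
move=> x x_in; rewrite -big_mkcond (big_ord1_eq _ (fun=> f x)).
by rewrite (sss_gap_layer (allP b_gaps x x_in)).
Qed.

Lemma sumn_uniq_le M (l : seq nat) : uniq l -> all (fun x => x <= M) l ->
  sumn l + 'C(size l, 2) <= size l * M.
Proof.
elim: M l => [|M IH] l l_uniq l_le.
  have : size l <= 1.
    by apply: (uniq_leq_size (s2 := [:: 0]) l_uniq) => x /(allP l_le); rewrite inE leqn0.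
  by case: l l_le {l_uniq} => [|x [|]] //= /andP []; rewrite leqn0 => /eqP ->.
have le_rem : all (fun x => x <= M) (rem M.+1 l).
  apply/allP => x; rewrite mem_rem_uniq // inE => /andP [neq_x /(allP l_le)].
  by rewrite leq_eqVlt (negPf neq_x).
have [top_in | top_notin] := boolP (M.+1 \in l).
  have l_perm := perm_to_rem top_in.
  have := IH _ (rem_uniq _ l_uniq) le_rem.
  by rewrite (perm_sumn l_perm) (perm_size l_perm) /= binS bin1; nia.
by rewrite (rem_id top_notin) in le_rem; have := IH l l_uniq le_rem; nia.
Qed.

Definition max_layer_size (s j : nat) : nat := s - 1 - 2 * j.
Definition layer_top (s j : nat) : nat := j.+1 * s - 1.

Section Layers.

Variables (s : nat) (b : seq nat).
Hypotheses (b_closed : sss_closed s b) (b_gt0 : all (fun x => 0 < x) b) (b_uniq : uniq b).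

Lemma all_sss_gap : all (sss_gap s) b.
Proof. by apply/allP => x; apply: closed_sss_gap. Qed.

Lemma mem_layer j x : x \in layer s j b ->
  [/\ x \in b, x = j * s.+2 + x %% s.+2, 0 < x %% s.+2 & x %% s.+2 + 2 * j < s].
Proof.
rewrite mem_filter => /andP [/eqP <- x_in].
by have /andP [? ?] := closed_sss_gap b_closed b_gt0 x_in; split=> //; apply: divn_eq.
Qed.

Lemma layer_uniq j : uniq (layer s j b).
Proof. exact: filter_uniq. Qed.

Lemma layer_size_le j : layer_size s b j <= max_layer_size s j.
Proof.
rewrite /layer_size -(size_iota (j * s.+2 + 1) (max_layer_size s j)).
apply: uniq_leq_size (layer_uniq j) _ => x /mem_layer [_ eq_x r_gt0 lt_r].
by rewrite mem_iota /max_layer_size; lia.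
Qed.

Lemma sumn_layer_le j :
  sumn (layer s j b) + 'C(layer_size s b j, 2) <= layer_size s b j * layer_top s j.
Proof.
apply: sumn_uniq_le (layer_uniq j) _; apply/allP => x /mem_layer [_ eq_x r_gt0 lt_r].
by rewrite /layer_top; nia.
Qed.

Lemma layer_subS j x e : x \in layer s j.+1 b -> e < 3 -> x - (s + e) \in layer s j b.
Proof.
move=> /mem_layer [x_in + + +] lt_e3; move: (x %% s.+2) => r eq_x r_gt0 lt_r.
have le_x : s + e <= x by rewrite eq_x mulSn; lia.
have [_ y_in] := b_closed x_in lt_e3 le_x.
have eq_y : x - (s + e) = j * s.+2 + (r + 2 - e) by rewrite eq_x mulSn; lia.
rewrite mem_filter y_in andbT eq_y.
by have [-> _] := @divmodnMDl s.+2 j (r + 2 - e) ltac:(lia).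
Qed.

Lemma layer_size_gap j :
  0 < layer_size s b j.+1 -> layer_size s b j.+1 + 2 <= layer_size s b j.
Proof.
move=> size_gt0; set up := layer s j.+1 b.
have up_gt : forall x, x \in up -> s.+2 < x.
  by move=> x /mem_layer [_ eq_x r_gt0 _]; rewrite eq_x mulSn; lia.
have up_le : forall x, x \in up -> x <= j.+2 * s.+2.
  by move=> x /mem_layer [_ eq_x _ lt_r]; lia.
have up_nonempty : exists x, x \in up by exists (nth 0 up 0); apply: mem_nth.
case: (ex_maxnP up_nonempty up_le) => M M_in M_max.
have M_gt := up_gt M M_in.
set down := [:: M - s, M - s.+1 & map (subn^~ s.+2) up].
have down_uniq : uniq down.
  have notin_shift y : M - s.+1 <= y -> y \notin map (subn^~ s.+2) up.
    by move=> le_y; apply/mapP => -[x /M_max ? eq_y]; lia.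
  rewrite /down /= inE negb_or !notin_shift ?leq_sub2l //= andbT map_inj_in_uniq.
    by rewrite layer_uniq andbT; apply/eqP; lia.
  by move=> x y /up_gt ? /up_gt ?; lia.
have down_sub : {subset down <= layer s j b}.
  move=> y; rewrite !inE => /or3P [/eqP -> | /eqP -> | /mapP [x x_in ->]].
  - by have := @layer_subS j M 0 M_in isT; rewrite addn0.
  - by have := @layer_subS j M 1 M_in isT; rewrite addn1.
  - by have := @layer_subS j x 2 x_in isT; rewrite addn2.
by have := uniq_leq_size down_uniq down_sub; rewrite /= size_map /layer_size addn2.
Qed.

End Layers.

Definition admissible (s : nat) (k : nat -> nat) : Prop :=
  k 0 <= s - 1 /\ forall j, 0 < k j.+1 -> k j.+1 + 2 <= k j.

Definition size_sum (s : nat) (k : nat -> nat) : nat := \sum_(j < nlayers s) k j.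
Definition pair_sum (s : nat) (k : nat -> nat) : nat := \sum_(j < nlayers s) 'C(k j, 2).
Definition top_sum (s : nat) (k : nat -> nat) : nat := \sum_(j < nlayers s) k j * layer_top s j.

Section LayerProfile.

Variables (s : nat) (b : seq nat).
Hypotheses (b_closed : sss_closed s b) (b_gt0 : all (fun x => 0 < x) b) (b_uniq : uniq b).

Lemma layer_size_admissible : admissible s (layer_size s b).
Proof.
split; last by move=> j; apply: layer_size_gap.
by have := layer_size_le b_closed b_gt0 b_uniq 0; rewrite /max_layer_size; lia.
Qed.

Lemma size_sum_layer_size : size b = size_sum s (layer_size s b).
Proof.
rewrite -sum1_size (sum_layers (fun=> 1) (all_sss_gap b_closed b_gt0)).
by apply: eq_bigr => j _; rewrite sum1_size.
Qed.

Lemma sumn_le_top_sum : sumn b + pair_sum s (layer_size s b) <= top_sum s (layer_size s b).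
Proof.
rewrite sumnE (sum_layers id (all_sss_gap b_closed b_gt0)) -big_split /=.
by apply: leq_sum => j _; rewrite -sumnE; apply: sumn_layer_le.
Qed.

End LayerProfile.

Lemma mul2_bin2 n : 2 * 'C(n, 2) + n = n * n.
Proof. by elim: n => [|n IH] //; rewrite binS bin1; nia. Qed.

Lemma bin2D a b : 'C(a + b, 2) = 'C(a, 2) + a * b + 'C(b, 2).
Proof. by elim: a => [|a IH]; rewrite ?add0n ?mul0n // addSn !binS !bin1 IH; lia. Qed.

Lemma admissible_le_head s k j : admissible s k -> 0 < k j -> k j + 2 * j <= k 0.
Proof.
move=> [_ k_gap]; elim: j => [|j IH] k_gt0; first by rewrite muln0 addn0.
by have k_le := k_gap j k_gt0; have := IH ltac:(lia); lia.
Qed.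

Lemma nlayersSS s : nlayers s.+2 = (nlayers s).+1.
Proof. by []. Qed.

Lemma nlayers_bound s j : j < nlayers s -> 2 * j + 2 <= s.
Proof. by rewrite /nlayers; lia. Qed.

Lemma eq_size_sum s k1 k2 : k1 =1 k2 -> size_sum s k1 = size_sum s k2.
Proof. by move=> eq_k; apply: eq_bigr => j _; rewrite eq_k. Qed.

Lemma eq_pair_sum s k1 k2 : k1 =1 k2 -> pair_sum s k1 = pair_sum s k2.
Proof. by move=> eq_k; apply: eq_bigr => j _; rewrite eq_k. Qed.

Lemma eq_top_sum s k1 k2 : k1 =1 k2 -> top_sum s k1 = top_sum s k2.
Proof. by move=> eq_k; apply: eq_bigr => j _; rewrite eq_k. Qed.

Lemma size_sumSS s k : size_sum s.+2 k = k 0 + size_sum s (fun j => k j.+1).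
Proof. by rewrite /size_sum nlayersSS big_ord_recl. Qed.

Lemma pair_sumSS s k : pair_sum s.+2 k = 'C(k 0, 2) + pair_sum s (fun j => k j.+1).
Proof. by rewrite /pair_sum nlayersSS big_ord_recl. Qed.

Lemma top_sumSS s k : top_sum s.+2 k =
  k 0 * s.+1 + top_sum s (fun j => k j.+1) + \sum_(j < nlayers s) k j.+1 * (s + 2 * j + 4).
Proof.
rewrite /top_sum nlayersSS big_ord_recl /= -addnA -big_split /=.
congr (_ + _); first by rewrite /layer_top mul1n subn1.
apply: eq_bigr => j _; rewrite /bump /= add1n /layer_top.
by have := nlayers_bound (ltn_ord j); nia.
Qed.

Lemma max_layer_sizeSS s : (fun j => max_layer_size s.+2 j.+1) =1 max_layer_size s.
Proof. by move=> j; rewrite /max_layer_size; lia. Qed.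

Lemma head_exchange_step s a d r k : s.+1 = a + d -> 2 * r + 2 <= s ->
  k = 0 \/ k + 2 * r + 2 <= a ->
  d * k + d * (r + 1) * (a - (2 * r + 1)) <=
    (s - 1 - 2 * r - k) * (2 * r + 3) + d * (r + 2) * (a - (2 * r + 3)).
Proof.
move=> eq_s le_r k_cases.
case: (ltnP a (2 * r + 2)) => lt_a.
  have k0 : k = 0 by case: k_cases => //; lia.
  by rewrite k0 (_ : a - (2 * r + 1) = 0) ?muln0; lia.
case: (leqP a (2 * r + 2)) => le_a.
  have k0 : k = 0 by case: k_cases => //; lia.
  rewrite k0 (_ : a - (2 * r + 1) = 1); last by lia.
  rewrite (_ : a - (2 * r + 3) = 0); last by lia.
  by rewrite (_ : s - 1 - 2 * r - 0 = d); [rewrite muln0 muln1 add0n ?addn0; nia | lia].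
have [c eq_a] : exists c, a = 2 * r + 3 + c by exists (a - (2 * r + 3)); lia.
subst a; rewrite (_ : 2 * r + 3 + c - (2 * r + 1) = c + 2); last by lia.
rewrite (_ : 2 * r + 3 + c - (2 * r + 3) = c); last by lia.
have [e eq_e] : exists e, c.+1 = k + e by exists (c.+1 - k); case: k_cases; lia.
rewrite (_ : s - 1 - 2 * r - k = d + e); last by lia.
case: k eq_e {k_cases} => [|k] eq_e; first by rewrite add0n in eq_e; subst e; nia.
have -> : c = k + e by lia.
nia.
Qed.

Section HeadLayer.

Variables (s : nat) (k : nat -> nat).
Hypothesis k_adm : admissible s.+2 k.
Let a := k 0.
Let d := s.+1 - a.

(* The slack term vanishes as soon as the layers beyond r are forced to be
   empty, i.e. when a <= 2r + 1. *)
Lemma head_exchange_upto r : r <= nlayers s ->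
  d * (a + \sum_(j < r) k j.+1) <=
  d + \sum_(j < r) (max_layer_size s j - k j.+1) * (2 * j + 3) + d * r.+1 * (a - (2 * r + 1)).
Proof.
have le_a : a <= s.+1 by case: k_adm => ? _; rewrite /a; lia.
elim: r => [|r IH] le_r.
  rewrite !big_ord0 !addn0 muln1 muln0 add0n.
  by case: (a) => [|a']; rewrite ?muln0 // subSS subn0 mulnS.
rewrite !big_ord_recr /=.
have := IH (ltnW le_r); set S1 := \sum_(j < r) _; set S2 := \sum_(j < r) _.
have k_cases : k r.+1 = 0 \/ k r.+1 + 2 * r + 2 <= a.
  case: (posnP (k r.+1)) => k_gt0; [by left | right].
  by have := admissible_le_head k_adm k_gt0; rewrite -/a; lia.
have := head_exchange_step (d := d) (_ : s.+1 = a + d) (nlayers_bound le_r) k_cases.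
by rewrite /max_layer_size !mulnDr; lia.
Qed.

Lemma head_exchange :
  d * (a + \sum_(j < nlayers s) k j.+1) <=
  d + \sum_(j < nlayers s) (max_layer_size s j - k j.+1) * (2 * j + 3).
Proof.
have := head_exchange_upto (leqnn (nlayers s)).
case: (posnP d) => [-> | d_gt0]; first by rewrite !mul0n.
have -> : a - (2 * nlayers s + 1) = 0 by move: d_gt0; rewrite /d /nlayers; lia.
by rewrite muln0 addn0.
Qed.

End HeadLayer.

Lemma head_layer_bound s k : admissible s.+2 k ->
  k 0 * s.+1 + \sum_(j < nlayers s) k j.+1 * (s + 2 * j + 4) + s.+1 * size_sum s (max_layer_size s)
  <= s.+1 + \sum_(j < nlayers s) max_layer_size s j * (s + 2 * j + 4) + 2 * 'C(k 0, 2)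
     + k 0 * \sum_(j < nlayers s) k j.+1.
Proof.
move=> k_adm; have le_a : k 0 <= s.+1 by case: k_adm => ? _; lia.
have k_le j : j < nlayers s -> k j.+1 <= max_layer_size s j.
  move=> _; case: (posnP (k j.+1)) => [-> // | k_gt0].
  by have := admissible_le_head k_adm k_gt0; rewrite /max_layer_size; lia.
have := head_exchange k_adm.
set a := k 0; set d := s.+1 - a; set K := \sum_(j < nlayers s) k j.+1.
have split_weight (f : nat -> nat) : \sum_(j < nlayers s) f j * (s + 2 * j + 4) =
    (\sum_(j < nlayers s) f j) * s.+1 + \sum_(j < nlayers s) f j * (2 * j + 3).
  by rewrite big_distrl -big_split; apply: eq_bigr => j _ /=; lia.
have sum_sub : \sum_(j < nlayers s) (max_layer_size s j - k j.+1) * (2 * j + 3)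
    + \sum_(j < nlayers s) k j.+1 * (2 * j + 3)
    = \sum_(j < nlayers s) max_layer_size s j * (2 * j + 3).
  by rewrite -big_split; apply: eq_bigr => j _ /=; rewrite -mulnDl subnK // k_le.
rewrite (split_weight (fun j => k j.+1)) split_weight -/K.
have eq_s : s.+1 = a + d by rewrite /d; lia.
have := mul2_bin2 a.
move: sum_sub; rewrite /size_sum eq_s !mulnDr !mulnDl; lia.
Qed.

Lemma profile_le_max s k : admissible s k ->
  top_sum s k + 'C(size_sum s (max_layer_size s), 2) + pair_sum s (max_layer_size s)
  <= top_sum s (max_layer_size s) + 'C(size_sum s k, 2) + pair_sum s k.
Proof.
have [n] := ubnP s; elim: n s k => // n IH [|[|s]] k lt_sn k_adm;
  try by rewrite /top_sum /pair_sum /size_sum !big_ord0.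
have k'_adm : admissible s (fun j => k j.+1).
  split; last by case: k_adm => _ k_gap j; apply: k_gap.
  case: (posnP (k 1)) => [-> // | k_gt0].
  by have := admissible_le_head k_adm k_gt0; case: k_adm; lia.
have := IH s _ ltac:(lia) k'_adm; have := head_layer_bound k_adm.
rewrite !top_sumSS !pair_sumSS !size_sumSS (eq_top_sum _ (max_layer_sizeSS s)).
rewrite (eq_pair_sum _ (max_layer_sizeSS s)) (eq_size_sum _ (max_layer_sizeSS s)) !bin2D.
have -> : \sum_(j < nlayers s) max_layer_size s.+2 j.+1 * (s + 2 * j + 4) =
          \sum_(j < nlayers s) max_layer_size s j * (s + 2 * j + 4).
  by apply: eq_bigr => j _; rewrite (max_layer_sizeSS s j).
have := mul2_bin2 (max_layer_size s.+2 0).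
rewrite (_ : max_layer_size s.+2 0 = s.+1); last by rewrite /max_layer_size; lia.
rewrite /size_sum; lia.
Qed.

Definition gap_set (s : nat) : seq nat := [seq x <- rev (iota 1 (s * s)) | sss_gap s x].

Lemma sss_gap_bound s x : sss_gap s x -> 0 < x <= s * s.
Proof.
move=> /andP [r_gt0 lt_r]; rewrite (divn_eq x s.+2).
move: (x %/ s.+2) (x %% s.+2) r_gt0 lt_r => q r r_gt0 lt_r.
apply/andP; split; first by lia.
by apply: leq_trans (_ : q.+1 * s <= s * s); [lia | apply: leq_mul; lia].
Qed.

Lemma mem_gap_set s x : (x \in gap_set s) = sss_gap s x.
Proof.
rewrite mem_filter mem_rev mem_iota.
by case x_gap: (sss_gap s x) => //=; have := sss_gap_bound x_gap; lia.
Qed.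

Lemma gap_set_decr s : sorted (fun x y => y < x) (gap_set s).
Proof.
apply: sorted_filter; first by move=> x y z /= lt_yx lt_zy; apply: ltn_trans lt_zy lt_yx.
by rewrite rev_sorted; apply: iota_ltn_sorted.
Qed.

Lemma gap_set_gt0 s : all (fun x => 0 < x) (gap_set s).
Proof. by apply/allP => x; rewrite mem_gap_set => /sss_gap_bound /andP []. Qed.

Lemma gap_set_uniq s : uniq (gap_set s).
Proof. by rewrite filter_uniq // rev_uniq iota_uniq. Qed.

Lemma gap_set_closed s : sss_closed s (gap_set s).
Proof.
move=> x e; rewrite !mem_gap_set => /andP [r_gt0 lt_r] lt_e3; rewrite (divn_eq x s.+2).
move: (x %/ s.+2) (x %% s.+2) r_gt0 lt_r => q r r_gt0 lt_r le_x.
have q_gt0 : 0 < q by move: lt_r le_x; case: q => [|q] //; lia.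
split; first by apply/eqP; nia.
have -> : q * s.+2 + r - (s + e) = q.-1 * s.+2 + (r + 2 - e).
  by case: q q_gt0 {le_x lt_r} => // q _; rewrite mulSn /=; lia.
by apply: sss_gapP; lia.
Qed.

Lemma layer_gap_set s j : j < nlayers s ->
  perm_eq (layer s j (gap_set s)) (iota (j * s.+2 + 1) (max_layer_size s j)).
Proof.
move=> lt_j; apply: uniq_perm => [||x]; [exact: filter_uniq (@gap_set_uniq s) | exact: iota_uniq |].
apply/idP/idP => [x_in | ].
  have [_ eq_x r_gt0 lt_r] := mem_layer (@gap_set_closed s) (@gap_set_gt0 s) x_in.
  by rewrite mem_iota /max_layer_size; lia.
rewrite mem_iota /max_layer_size => /andP [le_x lt_x].
have eq_x : x = j * s.+2 + (x - j * s.+2) by lia.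
have [eq_q _] := @divmodnMDl s.+2 j (x - j * s.+2) ltac:(lia).
by rewrite mem_filter eq_x eq_q eqxx mem_gap_set; apply: sss_gapP; lia.
Qed.

Lemma sumn_iota a n : sumn (iota a n) = a * n + 'C(n, 2).
Proof. by elim: n a => [|n IH] a /=; rewrite ?muln0 // IH binS bin1; lia. Qed.

Lemma sumn_gap_set s :
  sumn (gap_set s) + pair_sum s (max_layer_size s) = top_sum s (max_layer_size s).
Proof.
rewrite sumnE (sum_layers id (all_sss_gap (@gap_set_closed s) (@gap_set_gt0 s))) -big_split.
apply: eq_bigr => j _; have lt_j := ltn_ord j; move: (nat_of_ord j) lt_j => {}j lt_j.
rewrite /= -sumnE (perm_sumn (layer_gap_set lt_j)) sumn_iota.
have := mul2_bin2 (max_layer_size s j); have := nlayers_bound lt_j.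
rewrite /max_layer_size /layer_top.
move=> le_j; have [n eq_s] : exists n, s = n + 2 * j + 1 by exists (s - 1 - 2 * j); lia.
have -> : s - 1 - 2 * j = n by lia.
by rewrite eq_s; nia.
Qed.

Lemma size_gap_set s : size (gap_set s) = size_sum s (max_layer_size s).
Proof.
rewrite -sum1_size (sum_layers (fun=> 1) (all_sss_gap (@gap_set_closed s) (@gap_set_gt0 s))).
by apply: eq_bigr => j _; rewrite sum1_size (perm_size (layer_gap_set (ltn_ord j))) size_iota.
Qed.

Definition max_core_size (s : nat) : nat :=
  top_sum s (max_layer_size s) - 'C(size_sum s (max_layer_size s), 2)
  - pair_sum s (max_layer_size s).

Lemma max_core_sizeP s : is_max_core_size s (max_core_size s).
Proof.
have gap_part := part_of_beta_partition (@gap_set_decr s) (@gap_set_gt0 s).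
have gap_beta := beta_set_part_of_beta (@gap_set_decr s) (@gap_set_gt0 s).
split.
  exists (part_of_beta (gap_set s)); split.
    by apply/(sss_coreP _ gap_part); rewrite gap_beta; apply: gap_set_closed.
  have := psize_beta_set (part_of_beta (gap_set s)).
  rewrite gap_beta size_part_of_beta size_gap_set /max_core_size.
  by have := sumn_gap_set s; lia.
move=> p p_core; have p_part : is_partition p by case: p_core.
have b_closed := (sss_coreP s p_part).1 p_core.
have b_gt0 : all (fun x => 0 < x) (beta_set p) by apply/allP => x /(beta_set_gt0 p_part).
have b_uniq := beta_set_uniq p_part.
have := profile_le_max (layer_size_admissible b_closed b_gt0 b_uniq).
have := sumn_le_top_sum b_closed b_gt0; have := psize_beta_set p.
rewrite -(size_sum_layer_size b_closed b_gt0) size_map size_iota /max_core_size; lia.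
Qed.

Lemma max_layer_size_last r t : max_layer_size (2 * r + t.+2) r = t.+1.
Proof. by rewrite /max_layer_size; lia. Qed.

Lemma layer_top_last r t : layer_top (2 * r + t.+2) r = r * (2 * r + t.+2) + (2 * r + t.+1).
Proof. by rewrite /layer_top mulSn; lia. Qed.

Lemma sum_max_layer_size r t : \sum_(j < r) max_layer_size (2 * r + t) j = r * (r + t).
Proof.
elim: r t => [|r IH] t; first by rewrite big_ord0.
rewrite big_ord_recr /= (_ : 2 * r.+1 + t = 2 * r + t.+2); last by lia.
by rewrite IH max_layer_size_last; lia.
Qed.

Lemma sum_bin2_max_layer_size r t :
  6 * \sum_(j < r) 'C(max_layer_size (2 * r + t) j, 2) + 3 * r * r + 3 * r * t + r
  = 4 * r * r * r + 6 * r * r * t + 3 * r * t * t.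
Proof.
elim: r t => [|r IH] t; first by rewrite big_ord0.
rewrite big_ord_recr /= (_ : 2 * r.+1 + t = 2 * r + t.+2); last by lia.
have := IH t.+2; set S := \sum_(j < r) _; have := mul2_bin2 t.+1; rewrite max_layer_size_last; lia.
Qed.

Lemma sum_top_max_layer_size r t :
  6 * \sum_(j < r) max_layer_size (2 * r + t) j * layer_top (2 * r + t) j + 4 * r * r + 5 * r * t
  = 4 * r * r * r * r + 8 * r * r * r * t + 3 * r * r * t * t
    + 6 * r * r * r + 9 * r * r * t + 3 * r * t * t.
Proof.
elim: r t => [|r IH] t; first by rewrite big_ord0.
rewrite big_ord_recr /= (_ : 2 * r.+1 + t = 2 * r + t.+2); last by lia.
have := IH t.+2; set S := \sum_(j < r) _; rewrite max_layer_size_last layer_top_last; lia.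
Qed.

Lemma mul6_bin3 n : 6 * 'C(n.+2, 3) = n.+2 * n.+1 * n.
Proof. by elim: n => [|n IH] //; rewrite binS; have := mul2_bin2 n.+2; lia. Qed.

Lemma max_core_sizeE r t : t < 2 -> max_core_size (2 * r + t) =
  \sum_(j < r) max_layer_size (2 * r + t) j * layer_top (2 * r + t) j
  - 'C(r * (r + t), 2) - \sum_(j < r) 'C(max_layer_size (2 * r + t) j, 2).
Proof.
move=> lt_t2; rewrite /max_core_size /top_sum /size_sum /pair_sum.
have -> : nlayers (2 * r + t) = r by rewrite /nlayers; lia.
by rewrite sum_max_layer_size.
Qed.

Lemma max_core_size_odd m : 0 < m -> max_core_size (2 * m - 1) = m * 'C(m.+1, 3).
Proof.
case: m => [|r] // _; have -> : 2 * r.+1 - 1 = 2 * r + 1 by lia.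
rewrite max_core_sizeE //.
have := sum_top_max_layer_size r 1; have := sum_bin2_max_layer_size r 1.
have := mul2_bin2 (r * (r + 1)).
have : 6 * (r.+1 * 'C(r.+2, 3)) = r.+1 * (r.+2 * r.+1 * r) by rewrite mulnCA mul6_bin3.
lia.
Qed.

Lemma max_core_size_even m : 0 < m ->
  max_core_size (2 * m) = m.+1 * 'C(m.+1, 3) + 'C(m.+2, 3).
Proof.
case: m => [|r] // _; rewrite -[2 * r.+1]addn0 max_core_sizeE //.
have := sum_top_max_layer_size r.+1 0; have := sum_bin2_max_layer_size r.+1 0.
have := mul2_bin2 (r.+1 * (r.+1 + 0)); have := mul6_bin3 r.+1.
have : 6 * (r.+2 * 'C(r.+2, 3)) = r.+2 * (r.+2 * r.+1 * r) by rewrite mulnCA mul6_bin3.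
lia.
Qed.

Theorem corollary3p5 (m : nat) (hm : 0 < m) :
  is_max_core_size (2 * m - 1) (m * 'C(m.+1, 3)) /\
  is_max_core_size (2 * m) (m.+1 * 'C(m.+1, 3) + 'C(m.+2, 3)).
Proof.
by rewrite -max_core_size_odd // -max_core_size_even //; split; apply: max_core_sizeP.
Qed.
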